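(* Let $z_i=(x_i,y_i)$, $i=1,\dots,n$, be training data with $y_i\in\mathbb{R}$. Index by $b$ the $B=n^n$ bootstrap samples (ordered $n$-tuples of indices in $\{1,\dots,n\}$), and for each $b$ let $\widehat{y_j}^{(b)}\in\mathbb{R}$ be the prediction for observation $j$ of the tree grown on sample $b$, assumed to be a deterministic function of $b$. Let $N_i^{(b)}$ be the number of times observation $i$ occurs in sample $b$ and $I_j^{(b)}=\mathbf{1}(N_j^{(b)}=0)$. For a weight vector $W=(w_1,\dots,w_n)$ with $\sum_i w_i=1$, let $g_W(b)$ be the probability of drawing the bootstrap sample $b$ when each of the $n$ draws selects observation $k$ with probability $w_k$, and define $$S(\hat F_W)=\sum_{j=1}^n w_j\left(y_j-\frac{\sum_b \widehat{y_j}^{(b)} I_j^{(b)} g_W(b)}{\sum_b I_j^{(b)} g_W(b)}\right)^2 .$$ Let $\hat F=\hat F_{W_0}$ with $W_0=(1/n,\dots,1/n)$, so that $S(\hat F)=\frac1n\sum_j (y_j-\widehat{y_j}^{\mathrm{OOB}})^2$ where $\widehat{y_j}^{\mathrm{OOB}}=\frac{\sum_b \widehat{y_j}^{(b)}I_j^{(b)}}{\sum_b I_j^{(b)}}$. For $\varepsilon$ near $0$ let $\hat F_{\varepsilon,i}$ be the distribution putting weight $\frac{1-\varepsilon}{n}+\varepsilon$ on $z_i$ and $\frac{1-\varepsilon}{n}$ on each $z_j$, $j\ne i$, and define $\hat D_i=\frac1n\frac{\partial S(\hat F_{\varepsilon,i})}{\partial\varepsilon}\big|_{\varepsilon=0}$.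 Then, with $e_n=(1-1/n)^{-n}$, $$\hat D_i=\frac1n\left\{(y_i-\widehat{y_i}^{\mathrm{OOB}})^2-\frac1n\sum_j (y_j-\widehat{y_j}^{\mathrm{OOB}})^2\right\}-\frac{2e_n}{n}\sum_j (y_j-\widehat{y_j}^{\mathrm{OOB}})\left\{\frac1B\sum_b (N_i^{(b)}-1)I_j^{(b)}\big(\widehat{y_j}^{(b)}-\widehat{y_j}^{\mathrm{OOB}}\big)\right\}.$$
   Context: This is the out-of-bag (OOB) error of a bagged ensemble of regression trees under squared-error loss, viewed as a functional $S$ of a weighted empirical distribution on the training data; $\hat D_i$ is $1/n$ times the empirical influence function of $S$. All sums over $b$ range over all $B=n^n$ bootstrap samples. *)

From HB Require Import structures.
From mathcomp Require Import all_boot all_order all_algebra.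
From mathcomp Require Import all_classical all_reals all_analysis.
Set Implicit Arguments. Unset Strict Implicit. Unset Printing Implicit Defensive.
Import Order.TTheory GRing.Theory Num.Theory.
Local Open Scope ring_scope.

(* Bootstrap samples: ordered n-tuples of indices, i.e. functions 'I_n -> 'I_n
   (b k = index of the observation selected at the k-th draw). *)
Notation bsample n := {ffun 'I_n -> 'I_n}.

Section Bagging.
Variables (R : realType) (n : nat).
Variables (y : 'I_n -> R) (yhat : bsample n -> 'I_n -> R).

Definition Ncount (b : bsample n) (i : 'I_n) : nat := #|[set k | b k == i]|.

Definition Iout (b : bsample n) (j : 'I_n) : R := ((Ncount b j == 0)%N)%:R.

Definition gW (w : 'I_n -> R) (b : bsample n) : R := \prod_(k < n) w (b k).

Definition S_W (w : 'I_n -> R) : R :=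
  \sum_(j < n) w j *
    (y j - (\sum_(b : bsample n) yhat b j * Iout b j * gW w b)
           / (\sum_(b : bsample n) Iout b j * gW w b)) ^+ 2.

Definition Weps (i : 'I_n) (eps : R) : 'I_n -> R :=
  fun j => (1 - eps) / n%:R + (if j == i then eps else 0).

Definition yOOB (j : 'I_n) : R :=
  (\sum_(b : bsample n) yhat b j * Iout b j) / (\sum_(b : bsample n) Iout b j).

Definition Dhat (i : 'I_n) : R :=
  n%:R^-1 * derive1 (fun eps : R => S_W (Weps i eps)) 0.

Definition e_n : R := (1 - n%:R^-1) ^- n.

End Bagging.
Arguments Iout {R n} b j.

From HB Require Import structures.
From mathcomp Require Import all_boot all_order all_algebra.
From mathcomp Require Import all_classical all_reals all_analysis.
From mathcomp Require Import ring.

(* At eps = 0 every bootstrap sample has probability n^-n, and since each of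
   the n draws picks i with probability (1 - eps)/n + eps, the derivative of
   g_W(b) is n^-(n-1) (N_i^(b) - 1).  The derivative of the weighted OOB mean
   sum_b yhat I g / sum_b I g is therefore a covariance between N_i - 1 and
   the centred predictions yhat - yOOB, divided by sum_b I_j^(b) = (n-1)^n,
   which produces e_n = n^n / (n-1)^n.  The product rule applied to
   w_j (y_j - yOOB_j)^2 then gives the two terms of D_i. *)

Set Implicit Arguments.
Unset Strict Implicit.
Unset Printing Implicit Defensive.
Import Order.TTheory GRing.Theory Num.Theory numFieldNormedType.Exports.
Local Open Scope ring_scope.

Lemma scaleRE (R : numFieldType) (a b : R) : a *: b = a * b.
Proof. by []. Qed.

Section DeriveBig.
Variables (R : numFieldType) (V : normedModType R) (x v : V).

Lemma is_derive_sumr (W : normedModType R) (I : Type) (r : seq I) (P : pred I)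
    (F : I -> V -> W) (dF : I -> W) :
  (forall k, is_derive x v (F k) (dF k)) ->
  is_derive x v (fun e => \sum_(k <- r | P k) F k e) (\sum_(k <- r | P k) dF k).
Proof.
move=> dF_F; rewrite -fct_sumE.
by elim/big_ind2 : _ => // *; [exact: is_derive_cst | exact: is_deriveD].
Qed.

Lemma is_derive_prod_at_const (I : finType) (F : I -> V -> R) (dF : I -> R) (c : R) :
  (forall k, is_derive x v (F k) (dF k)) -> (forall k, F k x = c) ->
  is_derive x v (fun e => \prod_k F k e) (c ^+ #|I|.-1 * \sum_k dF k).
Proof.
move=> dF_F Fx; rewrite -fct_prodE cardT enumT [index_enum _]unlock.
elim: (Finite.enum I) => [|a r IH] /=.
  by rewrite !big_nil mulr0; exact: is_derive_cst.
rewrite !big_cons; apply: is_derive_eq (is_deriveM (dF_F a) IH) _.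
have -> : (\prod_(k <- r) F k) x = c ^+ size r.
  by rewrite fct_prodE (eq_bigr (fun=> c)) // big_const_seq count_predT iter_mulr_1.
rewrite Fx mulrDr addrC; congr (_ + _).
by case: r {IH} => [|b r]; rewrite ?big_nil ?mulr0 ?scaler0 // exprS -mulrA.
Qed.

End DeriveBig.

Lemma is_derive_weighted_mean (R : realType) (x v : R) (I : finType)
    (a u : I -> R) (g : I -> R -> R) (dg : I -> R) (c : R) :
  c != 0 -> \sum_k u k != 0 ->
  (forall k, is_derive x v (g k) (dg k)) -> (forall k, g k x = c) ->
  is_derive x v (fun e => (\sum_k a k * u k * g k e) / \sum_k u k * g k e)
    ((\sum_k u k * dg k * (a k - (\sum_l a l * u l) / \sum_l u l))
     / (c * \sum_k u k)).
Proof.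
move=> c_neq0 u_neq0 dg_g gx; set m := (\sum_l a l * u l) / _.
have dN : is_derive x v (fun e => \sum_k a k * u k * g k e) (\sum_k a k * u k * dg k).
  by apply: is_derive_sumr => k; exact: is_deriveZ.
have dD : is_derive x v (fun e => \sum_k u k * g k e) (\sum_k u k * dg k).
  by apply: is_derive_sumr => k; exact: is_deriveZ.
have Nx : \sum_k a k * u k * g k x = c * \sum_k a k * u k.
  by rewrite mulr_sumr; apply: eq_bigr => k _; rewrite gx mulrC.
have Dx : \sum_k u k * g k x = c * \sum_k u k.
  by rewrite mulr_sumr; apply: eq_bigr => k _; rewrite gx mulrC.
have Dx_neq0 : \sum_k u k * g k x != 0 by rewrite Dx mulf_neq0.
apply: is_derive_eq (is_deriveM dN (is_deriveV Dx_neq0 dD)) _.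
have -> : \sum_k u k * dg k * (a k - m)
          = \sum_k a k * u k * dg k - m * \sum_k u k * dg k.
  by rewrite mulr_sumr -sumrB; apply: eq_bigr => k _; ring.
by rewrite Nx Dx /m !scaleRE; field; rewrite u_neq0 c_neq0.
Qed.

Section OutOfBag.
Variables (R : realType) (n : nat).

Lemma natr_Ncount (b : bsample n) (i : 'I_n) :
  (Ncount b i)%:R = \sum_(k < n) ((b k == i)%:R : R).
Proof.
rewrite /Ncount -sum1_card natr_sum big_mkcond.
by apply: eq_bigr => k _; rewrite inE; case: eqP.
Qed.

Lemma sum_Iout (j : 'I_n) : \sum_(b : bsample n) (Iout b j : R) = (n.-1 ^ n)%:R.
Proof.
have out_on b : (Ncount b j == 0)%N = (b \in ffun_on (predC1 j)).
  rewrite /Ncount cards_eq0; apply/eqP/ffun_onP => [/setP b_out k | b_out].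
    by apply/negP => /eqP bkj; have := b_out k; rewrite !inE bkj eqxx.
  by apply/setP => k; rewrite !inE; apply/negbTE/b_out.
have -> : (n.-1 ^ n)%N = #|ffun_on_mem 'I_n (mem (predC1 j))|.
  by rewrite card_ffun_on cardC1 !card_ord.
rewrite -sum1_card natr_sum [RHS]big_mkcond /=.
by apply: eq_bigr => b _; rewrite /Iout out_on; case: (_ \in _).
Qed.

Variable i : 'I_n.

Lemma Weps0 (m : 'I_n) : Weps i 0 m = n%:R^-1 :> R.
Proof. by rewrite /Weps subr0 mul1r; case: (m == i); rewrite addr0. Qed.

Lemma is_derive_Weps (e : R) (m : 'I_n) :
  is_derive e 1 (fun eps => Weps i eps m) ((m == i)%:R - n%:R^-1).
Proof.
by rewrite /Weps; case: (m == i); apply: is_derive_eq; rewrite !scaleRE /=; ring.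
Qed.

Lemma gW_Weps0 (b : bsample n) : gW (Weps i 0) b = n%:R^-1 ^+ n :> R.
Proof.
rewrite /gW (eq_bigr (fun=> n%:R^-1)) => [|k _]; last exact: Weps0.
by rewrite prodr_const card_ord.
Qed.

Hypothesis n_gt0 : (0 < n)%N.

Let n_neq0 : n%:R != 0 :> R.
Proof. by rewrite pnatr_eq0 -lt0n. Qed.

Lemma is_derive_gW_Weps (b : bsample n) :
  is_derive (0 : R) 1 (fun e => gW (Weps i e) b)
    (n%:R^-1 ^+ n.-1 * ((Ncount b i)%:R - 1)).
Proof.
apply: is_derive_eq (is_derive_prod_at_const
  (fun k => is_derive_Weps 0 (b k)) (fun k => Weps0 (b k))) _.
rewrite card_ord sumrB -natr_Ncount sumr_const card_ord.
by rewrite -[n%:R^-1 *+ n]mulr_natr mulVf.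
Qed.

Lemma e_nE : e_n R n = (n ^ n)%:R / (n.-1 ^ n)%:R.
Proof.
rewrite /e_n (_ : 1 - n%:R^-1 = (n%:R - 1) / n%:R); last by field.
by rewrite !natrX -subn1 natrB // expr_div_n invf_div.
Qed.

(* Without it no bootstrap sample leaves an observation out: sum_b I_j^(b) = 0. *)
Hypothesis n_gt1 : (1 < n)%N.

Variables (y : 'I_n -> R) (yhat : bsample n -> 'I_n -> R).

Definition yOOB_W (w : 'I_n -> R) (j : 'I_n) : R :=
  (\sum_(b : bsample n) yhat b j * Iout b j * gW w b)
  / \sum_(b : bsample n) Iout b j * gW w b.

Definition oob_cov (j : 'I_n) : R :=
  (n ^ n)%:R^-1 *
  \sum_(b : bsample n) ((Ncount b i)%:R - 1) * Iout b j * (yhat b j - yOOB yhat j).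

Lemma yOOB_W_Weps0 (j : 'I_n) : yOOB_W (Weps i 0) j = yOOB yhat j.
Proof.
have c_neq0 : n%:R^-1 ^+ n != 0 :> R by rewrite expf_neq0 // invr_eq0.
rewrite /yOOB_W /yOOB.
under eq_bigr do rewrite gW_Weps0.
under [X in _ / X]eq_bigr do rewrite gW_Weps0.
by rewrite -!mulr_suml invfM mulrACA divff ?mulr1.
Qed.

Lemma is_derive_yOOB_W (j : 'I_n) :
  is_derive (0 : R) 1 (fun e => yOOB_W (Weps i e) j) (n%:R * e_n R n * oob_cov j).
Proof.
have c_neq0 : n%:R^-1 ^+ n.-1 != 0 :> R by rewrite expf_neq0 // invr_eq0.
have expS : n%:R^-1 ^+ n = n%:R^-1 * n%:R^-1 ^+ n.-1 :> R.
  by rewrite -exprS prednK.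
have g0_neq0 : n%:R^-1 ^+ n != 0 :> R by rewrite expS mulf_neq0 // invr_eq0.
have nn_neq0 : (n ^ n)%:R != 0 :> R by rewrite pnatr_eq0 expn_eq0 eqn0Ngt n_gt0.
have oob_neq0 : (n.-1 ^ n)%:R != 0 :> R.
  by rewrite pnatr_eq0 expn_eq0 -subn1 subn_eq0 leqNgt n_gt1.
have Iout_neq0 : \sum_(b : bsample n) Iout b j != 0 :> R by rewrite sum_Iout.
apply: is_derive_eq (is_derive_weighted_mean (fun b => yhat b j)
  g0_neq0 Iout_neq0 is_derive_gW_Weps gW_Weps0) _.
rewrite -/(yOOB yhat j) sum_Iout e_nE /oob_cov expS.
rewrite (_ : \sum_(b : bsample n) _ = n%:R^-1 ^+ n.-1 * \sum_(b : bsample n)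
    ((Ncount b i)%:R - 1) * Iout b j * (yhat b j - yOOB yhat j)); last first.
  by rewrite mulr_sumr; apply: eq_bigr => b _; ring.
by field; rewrite oob_neq0 nn_neq0 c_neq0 n_neq0.
Qed.

Lemma is_derive_S_W_Weps :
  is_derive (0 : R) 1 (fun e => S_W y yhat (Weps i e))
    ((y i - yOOB yhat i) ^+ 2 - n%:R^-1 * \sum_j (y j - yOOB yhat j) ^+ 2
     - 2 * e_n R n * \sum_j (y j - yOOB yhat j) * oob_cov j).
Proof.
have d_term j : is_derive (0 : R) 1
    (fun e => Weps i e j * (y j - yOOB_W (Weps i e) j) ^+ 2)
    (((j == i)%:R - n%:R^-1) * (y j - yOOB yhat j) ^+ 2
     - 2 * e_n R n * ((y j - yOOB yhat j) * oob_cov j)).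
  have dw := is_derive_Weps 0 j; have dQ := is_derive_yOOB_W j.
  by apply: is_derive_eq; rewrite !scaleRE Weps0 yOOB_W_Weps0; field.
apply: is_derive_eq (is_derive_sumr _ _ d_term) _.
rewrite sumrB -mulr_sumr; congr (_ - _).
under eq_bigr do rewrite mulrBl.
rewrite sumrB -mulr_sumr (bigD1 i) //= eqxx mul1r big1 ?addr0 // => j /negbTE ->.
by rewrite mul0r.
Qed.

End OutOfBag.

Theorem theorem1 (R : realType) (n : nat) (hn : (1 < n)%N)
  (y : 'I_n -> R) (yhat : {ffun 'I_n -> 'I_n} -> 'I_n -> R) (i : 'I_n) :
  derivable (fun eps : R => S_W y yhat (Weps i eps)) 0 1 /\
  Dhat y yhat i =
    n%:R^-1 * ((y i - yOOB yhat i) ^+ 2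
               - n%:R^-1 * \sum_(j < n) (y j - yOOB yhat j) ^+ 2)
    - 2 * e_n R n / n%:R *
      \sum_(j < n) (y j - yOOB yhat j) *
        ((n ^ n)%:R^-1 *
         \sum_(b : {ffun 'I_n -> 'I_n})
            ((Ncount b i)%:R - 1) * Iout b j * (yhat b j - yOOB yhat j)).
Proof.
have dS := is_derive_S_W_Weps i (ltnW hn) hn y yhat.
split; first by case: dS.
by rewrite /Dhat derive1E derive_val /oob_cov; ring.
Qed.
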